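(* Let $\mathbb{F}$ be a finite field, $n$ a positive integer coprime with $|\mathbb{F}|$, and $\alpha\in\mathbb{F}$ with $\mathrm{ord}(\alpha)=n$. Let $A:=\mathbb{F}[x]/\langle x^n-1\rangle$. Let $\delta\in\mathbb{N}_0$ and $G:=\sum_{\nu=0}^{\delta}z^\nu\begin{pmatrix}1&\alpha^\nu&\alpha^{2\nu}&\ldots&\alpha^{(n-1)\nu}\end{pmatrix}\in\mathbb{F}[z]^{1\times n}$. Then the $\mathbb{F}$-algebra homomorphism $\sigma:A\to A$ defined by $\sigma(x)=\alpha x$ is an $\mathbb{F}$-automorphism of $A$, and the submodule $\mathcal{C}=\mathrm{im}\,G=\{uG\mid u\in\mathbb{F}[z]\}\subseteq\mathbb{F}[z]^n$ is $\sigma$-cyclic. In particular, if $\delta<n$, then $\mathcal{C}$ is a ($\sigma$-)cyclic MDS convolutional code with parameters $(n,1,\delta)$.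
   Context: $\mathrm{ord}(\alpha)$ is the multiplicative order of $\alpha$. For $\sigma\in\mathrm{Aut}_{\mathbb{F}}(A)$, the skew polynomial ring $A[z;\sigma]$ is the set of polynomials $\sum_\nu z^\nu a_\nu$ ($a_\nu\in A$) with usual addition and multiplication determined by associativity, distributivity, the multiplication of $A$, and the rule $az=z\sigma(a)$ for $a\in A$. Let $\mathfrak{p}:\mathbb{F}^n\to A$, $(v_0,\ldots,v_{n-1})\mapsto\sum_{i=0}^{n-1}v_ix^i$, extended coefficientwise to $\mathfrak{p}:\mathbb{F}[z]^n\to A[z;\sigma]$, $\sum_\nu z^\nu v_\nu\mapsto\sum_\nu z^\nu\mathfrak{p}(v_\nu)$. A submodule $\mathcal{C}\subseteq\mathbb{F}[z]^n$ is $\sigma$-cyclic if $\mathfrak{p}(\mathcal{C})$ is a left ideal of $A[z;\sigma]$. A convolutional code with parameters $(n,1,\delta)$ is $\mathrm{im}\,G$ for a right invertible $G\in\mathbb{F}[z]^{1\times n}$ whose entries have maximum degree $\delta$; it is MDS if its free distance $\min\{\mathrm{wt}(v)\mid 0\ne v\in\mathcal{C}\}$ equals $n(\delta+1)$, where $\mathrm{wt}(\sum_j v_jz^j)=\sum_j(\text{Hamming weight of }v_j)$. *)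

From HB Require Import structures.
From mathcomp Require Import all_boot all_order all_algebra.
Set Implicit Arguments. Unset Strict Implicit. Unset Printing Implicit Defensive.
Import Order.TTheory GRing.Theory.
Local Open Scope ring_scope.

(* Conventions.
   - F[z] is {poly F}; its variable 'X plays the role of z.
   - F[z]^n is 'rV[{poly F}]_n  (row vectors of polynomials).
   - A = F[x]/<x^n - 1> is MathComp's quotient ring {poly %/ ('X^n - 1)}
     (a commutative F-algebra; 'qX is the class of x).
   - The skew polynomial ring A[z;sigma] is represented by {poly A}
     (the coefficient sequence (a_nu)_nu of  sum_nu z^nu a_nu), with the usual
     addition and with the skew multiplication [skmul] determined by
     a z = z sigma(a), i.e.
       (sum_i z^i a_i)(sum_j z^j b_j) = sum_k z^k (sum_{i+j=k} sigma^j(a_i) b_j). *)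

Section Defs.
Variable F : fieldType.

Definition xn1 (n : nat) : {poly F} := 'X^n - 1.

Definition Aring (n : nat) := {poly %/ xn1 n}.

Definition sigmaA (n : nat) (alpha : F) (a : Aring n) : Aring n :=
  in_qpoly (xn1 n) ((a : {poly F}) \Po (alpha *: 'X)).

Definition skmul (R : nzRingType) (sigma : R -> R) (a b : {poly R}) : {poly R} :=
  \poly_(k < size a + size b)
     \sum_(j < k.+1) iter j sigma (a`_(k - j)) * b`_j.

Definition left_ideal (R : nzRingType) (sigma : R -> R) (S : {poly R} -> Prop) :=
  [/\ S 0,
      (forall f g, S f -> S g -> S (f - g)) &
      (forall r f, S f -> S (skmul sigma r f))].

Definition pvec (n : nat) (v : 'rV[F]_n) : Aring n :=
  in_qpoly (xn1 n) (\sum_(i < n) v ord0 i *: 'X^i).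

Definition pz (n : nat) (c : 'rV[{poly F}]_n) : {poly (Aring n)} :=
  \poly_(nu < \max_(i < n) size (c ord0 i)) pvec (\row_(i < n) (c ord0 i)`_nu).

Definition pimage (n : nat) (C : 'rV[{poly F}]_n -> Prop) : {poly (Aring n)} -> Prop :=
  fun f => exists2 c, C c & f = pz c.

Definition sigma_cyclic (n : nat) (sigma : Aring n -> Aring n)
  (C : 'rV[{poly F}]_n -> Prop) : Prop :=
  left_ideal sigma (pimage C).

Definition im_mx (k n : nat) (G : 'M[{poly F}]_(k, n)) : 'rV[{poly F}]_n -> Prop :=
  fun c => exists u : 'rV[{poly F}]_k, c = u *m G.

Definition right_invertible (k n : nat) (G : 'M[{poly F}]_(k, n)) : Prop :=
  exists H : 'M[{poly F}]_(n, k), G *m H = 1%:M.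

Definition max_entry_deg (k n : nat) (G : 'M[{poly F}]_(k, n)) : nat :=
  \max_(i < k) \max_(j < n) (size (G i j)).-1.

Definition conv_code (n k delta : nat) (C : 'rV[{poly F}]_n -> Prop) : Prop :=
  exists G : 'M[{poly F}]_(k, n),
    [/\ right_invertible G, max_entry_deg G = delta &
        forall c, C c <-> im_mx G c].

Definition wt (n : nat) (v : 'rV[{poly F}]_n) : nat :=
  \sum_(i < n) count (fun a : F => a != 0%R) (v ord0 i : seq F).

Definition free_distance_eq (n : nat) (C : 'rV[{poly F}]_n -> Prop) (d : nat) : Prop :=
  (exists c, [/\ C c, c != 0 & wt c = d]) /\
  (forall c, C c -> c != 0 -> (d <= wt c)%N).

Definition MDS (n delta : nat) (C : 'rV[{poly F}]_n -> Prop) : Prop :=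
  free_distance_eq C (n * delta.+1).

Definition Gvand (n delta : nat) (alpha : F) : 'rV[{poly F}]_n :=
  \row_(i < n) \sum_(nu < delta.+1) (alpha ^+ (i * nu)) *: 'X^nu.

End Defs.

Arguments sigmaA {F} n alpha a.
Arguments conv_code {F} n k delta C.
Arguments MDS {F} n delta C.
Arguments pvec {F} n v.

(* Under [p], a codeword [U G] becomes [U g] with
   [g = \sum_(nu <= delta) z^nu sigma^nu(e)] and [e = 1 + x + ... + x^(n-1)].
   Since [a e = a(1) e] in [A], the skew product [(z^m a) (U g)] is again an
   F[z]-multiple of [g] (with coefficients [U_i * sigma^i(a)(1)]), so these
   multiples form a left ideal of [A[z; sigma]].
   For the distance, the coefficient of [z^k] in the [i]-th entry of [U G] is
   [P_k(alpha^i)], where [P_k] is built from a window of coefficients of [U].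
   A nonzero polynomial supported in degrees [s..t] vanishes at no more than
   [t - s] of the distinct nonzero [alpha^i]; summing these bounds over the
   support of [U G] gives weight at least [n (delta + 1)], which [G] attains. *)

From HB Require Import structures.
From mathcomp Require Import all_boot all_order all_algebra.
From mathcomp Require Import zify.
Set Implicit Arguments. Unset Strict Implicit. Unset Printing Implicit Defensive.
Import GRing.Theory Pdiv.RingMonic.
Local Open Scope ring_scope.

Section SkewProduct.
Variables (R : nzRingType) (sigma : {additive R -> R}).

Lemma iter_sigma0 j : iter j sigma 0 = 0.
Proof. by elim: j => //= j ->; rewrite raddf0. Qed.

Lemma iter_sigmaD j : {morph iter j sigma : x y / x + y}.
Proof. by elim: j => // j IHj x y; rewrite /= IHj raddfD. Qed.

Lemma coef_skmul (a b : {poly R}) k :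
  (skmul sigma a b)`_k = \sum_(j < k.+1) iter j sigma a`_(k - j) * b`_j.
Proof.
rewrite coef_poly; case: ltnP => // hk; symmetry; apply: big1 => j _.
have [jb | bj] := ltnP j (size b); last by rewrite (nth_default _ bj) mulr0.
rewrite (@nth_default _ _ a (k - j)) ?iter_sigma0 ?mul0r // leq_subRL.
  by apply: leq_trans hk; rewrite addnC leq_add2l ltnW.
by apply: leq_trans hk; rewrite (leq_trans (ltnW jb)) ?leq_addl.
Qed.

Lemma skmul0l (b : {poly R}) : skmul sigma 0 b = 0.
Proof.
apply/polyP => k; rewrite coef_skmul coef0 big1 // => j _.
by rewrite coef0 iter_sigma0 mul0r.
Qed.

Lemma skmulDl (a1 a2 b : {poly R}) :
  skmul sigma (a1 + a2) b = skmul sigma a1 b + skmul sigma a2 b.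
Proof.
apply/polyP => k; rewrite coefD !coef_skmul -big_split /=.
by apply: eq_bigr => j _; rewrite coefD iter_sigmaD mulrDl.
Qed.

Lemma skmul_mulX (a b : {poly R}) :
  skmul sigma (a * 'X) b = skmul sigma a b * 'X.
Proof.
apply/polyP => -[|k]; rewrite coefMX coef_skmul /=.
  by rewrite big_ord1 coefMX iter_sigma0 mul0r.
rewrite big_ord_recr /= subnn coefMX -iterS iter_sigma0 mul0r addr0 coef_skmul.
by apply: eq_bigr => j _; rewrite coefMX subSn ?ltn_ord // -ltnS.
Qed.

Lemma skmulCl (c : R) (b : {poly R}) :
  skmul sigma c%:P b = \poly_(j < size b) (iter j sigma c * b`_j).
Proof.
apply/polyP => k; rewrite coef_skmul coef_poly big_ord_recr /= subnn coefC /=.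
rewrite big1 ?add0r => [|j _]; last first.
  by rewrite coefC subn_eq0 leqNgt ltn_ord iter_sigma0 mul0r.
by case: ltnP => // kb; rewrite nth_default ?mulr0.
Qed.

End SkewProduct.

Section SkewMultiples.
Variables (F : fieldType) (R : algType F) (sigma : {linear R -> R}).
Hypothesis sigmaM : {morph sigma : x y / x * y}.
Variables (eps : R -> F) (e : R).
Hypothesis mul_e : forall a, a * e = eps a *: e.

Local Notation "U ^A" := (map_poly (in_alg R) U) (format "U ^A").

Definition Fz_multiples (g : {poly R}) : {poly R} -> Prop :=
  fun P => exists U : {poly F}, P = U^A * g.

Lemma iter_sigmaZ j c : {morph iter j sigma : x / c *: x}.
Proof. by elim: j => // j IHj x; rewrite /= IHj linearZ. Qed.

Lemma iter_sigmaM j : {morph iter j sigma : x y / x * y}.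
Proof. by elim: j => // j IHj x y; rewrite /= IHj sigmaM. Qed.

Lemma iter_sigma_mul_e j nu a : (nu <= j)%N ->
  iter j sigma a * iter nu sigma e = eps (iter (j - nu) sigma a) *: iter nu sigma e.
Proof.
by move=> le_nu_j; rewrite -{1}(subnKC le_nu_j) iterD -iter_sigmaM mul_e iter_sigmaZ.
Qed.

Variable d : nat.
Local Notation g := (\poly_(nu < d) iter nu sigma e).

Lemma skmulCl_multiple c U :
  skmul sigma c%:P (U^A * g) =
    (\poly_(i < size U) (U`_i * eps (iter i sigma c)))^A * g.
Proof.
rewrite skmulCl; apply/polyP => j; rewrite coef_poly.
set W := \poly_(i < size U) _.
suff -> : (W^A * g)`_j = iter j sigma c * (U^A * g)`_j.
  by case: ltnP => // hj; rewrite nth_default ?mulr0.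
rewrite !coefM mulr_sumr; apply: eq_bigr => i _.
rewrite !coef_map coef_poly /= !mulr_algl -scalerAr.
have [iU | Ui] := ltnP i (size U); last by rewrite (nth_default _ Ui) !scale0r.
rewrite coef_poly; case: ifP => _; last by rewrite mulr0 !scaler0.
by rewrite (iter_sigma_mul_e c (leq_subr i j)) subKn ?scalerA // -ltnS.
Qed.

Lemma Fz_multiples_left_ideal : left_ideal sigma (Fz_multiples g).
Proof.
split.
- by exists 0; rewrite rmorph0 mul0r.
- by move=> _ _ [U ->] [V ->]; exists (U - V); rewrite rmorphB mulrBl.
move=> r _ [U ->]; elim/poly_ind: r => [|r c [V skmul_r]].
  by exists 0; rewrite skmul0l rmorph0 mul0r.
rewrite skmulDl skmul_mulX skmul_r skmulCl_multiple.
exists (V * 'X + \poly_(i < size U) (U`_i * eps (iter i sigma c))).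
by rewrite rmorphD rmorphM /= map_polyX mulrDl -!mulrA (commr_polyX g).
Qed.

End SkewMultiples.

Lemma left_ideal_ext (R : nzRingType) (sigma : R -> R) (S T : {poly R} -> Prop) :
  (forall P, S P <-> T P) -> left_ideal sigma S -> left_ideal sigma T.
Proof.
move=> ST [S0 SB SM]; split.
- exact/ST.
- by move=> f g /ST Sf /ST Sg; apply/ST/SB.
- by move=> r f /ST Sf; apply/ST/SM.
Qed.

Section QuotientTwist.
Variables (F : fieldType) (n : nat).
Hypothesis n_gt0 : (0 < n)%N.
Local Notation A := (Aring F n).
Local Notation inA := (in_qpoly (xn1 F n)).

Lemma monic_xn1 : xn1 F n \is monic.
Proof. by rewrite /xn1 -polyC1 monicXnsubC. Qed.

Lemma mk_monic_xn1 : mk_monic (xn1 F n) = xn1 F n.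
Proof. by rewrite /mk_monic size_Xn_sub_1 // ltnS n_gt0 monic_xn1. Qed.

Lemma in_qpolyK (a : A) : inA a = a.
Proof. by apply: val_inj; apply: in_qpoly_small; apply: size_mk_monic. Qed.

Lemma in_qpoly_mulr_xn1 q : inA (q * xn1 F n) = 0.
Proof.
by apply: val_inj; rewrite /= mk_monic_xn1 rmodp_mull ?monic_xn1.
Qed.

Lemma xn1_comp_scale (b : F) : b ^+ n = 1 -> xn1 F n \Po (b *: 'X) = xn1 F n.
Proof.
by move=> bn; rewrite /xn1 comp_polyB comp_Xn_poly comp_polyC exprZn bn scale1r.
Qed.

Lemma sigmaA_in_qpoly (b : F) q : b ^+ n = 1 ->
  sigmaA n b (inA q) = inA (q \Po (b *: 'X)).
Proof.
move=> bn; rewrite /sigmaA /= mk_monic_xn1.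
rewrite [in RHS](rdivp_eq monic_xn1 q) comp_polyD comp_polyM xn1_comp_scale //.
by rewrite rmorphD /= in_qpoly_mulr_xn1 add0r.
Qed.

Lemma sigmaA_is_linear (b : F) : linear (sigmaA n b).
Proof. by move=> c x y; rewrite /sigmaA /= comp_polyD comp_polyZ linearP. Qed.

HB.instance Definition _ (b : F) :=
  GRing.isLinear.Build F A A *:%R (sigmaA n b) (sigmaA_is_linear b).

Lemma sigmaA_monoid_morphism (b : F) : b ^+ n = 1 -> monoid_morphism (sigmaA n b).
Proof.
move=> bn; split; first by rewrite -in_qpoly1 sigmaA_in_qpoly // comp_polyC.
move=> x y; rewrite -[x * y]/(inA ((x : {poly F}) * y)) sigmaA_in_qpoly //.
by rewrite comp_polyM rmorphM.
Qed.

Lemma sigmaA1 : sigmaA n (1 : F) =1 id.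
Proof. by move=> x; rewrite /sigmaA scale1r comp_polyXr in_qpolyK. Qed.

Lemma sigmaA_comp (b c : F) x : b ^+ n = 1 ->
  sigmaA n b (sigmaA n c x) = sigmaA n (c * b) x.
Proof.
move=> bn; rewrite [sigmaA n c x]/sigmaA sigmaA_in_qpoly // -comp_polyA.
by rewrite comp_polyZ comp_polyX scalerA.
Qed.

Lemma iter_sigmaA (b : F) j : b ^+ n = 1 ->
  iter j (sigmaA n b) =1 sigmaA n (b ^+ j).
Proof.
move=> bn; elim: j => [|j IHj] x /=; first by rewrite sigmaA1.
by rewrite IHj sigmaA_comp // exprSr.
Qed.

Lemma unity_root_neq0 (b : F) : b ^+ n = 1 -> b != 0.
Proof.
by move=> bn; apply: contra_eq_neq bn => ->; rewrite expr0n gtn_eqF // eq_sym oner_neq0.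
Qed.

Lemma sigmaA_bij (b : F) : b ^+ n = 1 -> bijective (sigmaA n b).
Proof.
move=> bn; have b0 := unity_root_neq0 bn.
have bVn : b^-1 ^+ n = 1 by rewrite exprVn bn invr1.
exists (sigmaA n b^-1) => x.
  by rewrite sigmaA_comp // mulfV // sigmaA1.
by rewrite sigmaA_comp // mulVf // sigmaA1.
Qed.

Lemma sigmaA_qX (b : F) : b ^+ n = 1 -> sigmaA n b 'qX = b *: 'qX.
Proof. by move=> bn; rewrite sigmaA_in_qpoly // comp_polyX linearZ. Qed.

End QuotientTwist.

Section CyclicCode.
Variables (F : fieldType) (n : nat).
Hypothesis n_gt0 : (0 < n)%N.
Local Notation A := (Aring F n).
Local Notation inA := (in_qpoly (xn1 F n)).
Local Notation "U ^A" := (map_poly (in_alg A) U) (format "U ^A").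

Lemma pvec_is_linear : linear (@pvec F n).
Proof.
move=> c v w; rewrite /pvec -linearP /= scaler_sumr -big_split /=.
by congr inA; apply: eq_bigr => i _; rewrite !mxE scalerDl scalerA.
Qed.

HB.instance Definition _ :=
  GRing.isLinear.Build F 'rV[F]_n A *:%R (@pvec F n) pvec_is_linear.

Definition qones : A := pvec n (const_mx 1).

Lemma mul_qones (a : A) : a * qones = (a : {poly F}).[1] *: qones.
Proof.
(* [a - a(1)] is a multiple of [x - 1], and [(x - 1) * qones = x^n - 1 = 0]. *)
set c := (a : {poly F}).[1].
have /factor_theorem [q Eq] : root ((a : {poly F}) - c%:P) 1.
  by rewrite rootE !hornerE subrr.
rewrite -[a in LHS]in_qpolyK /qones /pvec -rmorphM -linearZ /= -mul_polyC.
rewrite -[a : {poly F}](subrK c%:P) Eq mulrDl -mulrA.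
under eq_bigr => i _ do rewrite mxE scale1r.
by rewrite -subrX1 -/(xn1 F n) in_qpolyD in_qpoly_mulr_xn1 // add0r.
Qed.

Lemma pvec_powers (b : F) : b ^+ n = 1 ->
  pvec n (\row_i b ^+ i) = sigmaA n b qones.
Proof.
move=> bn; rewrite /qones /pvec sigmaA_in_qpoly //; congr inA.
rewrite linear_sum; apply: eq_bigr => i _ /=.
by rewrite !mxE comp_polyZ comp_Xn_poly exprZn scale1r.
Qed.

Lemma coef_pz (c : 'rV[{poly F}]_n) k :
  (pz c)`_k = pvec n (\row_i (c ord0 i)`_k).
Proof.
rewrite coef_poly; case: ltnP => // hk.
suff -> : \row_i (c ord0 i)`_k = 0 by rewrite linear0.
apply/rowP => i; rewrite !mxE nth_default //.
by apply: leq_trans hk; apply: (leq_bigmax i).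
Qed.

Lemma pz_scale (U : {poly F}) (c : 'rV[{poly F}]_n) : pz (U *: c) = U^A * pz c.
Proof.
apply/polyP => k; rewrite coef_pz coefM.
under [RHS]eq_bigr => i _ do rewrite coef_map coef_pz /= mulr_algl -linearZ.
rewrite -linear_sum; congr pvec; apply/rowP => j.
by rewrite summxE !mxE coefM; apply: eq_bigr => i _; rewrite !mxE.
Qed.

Lemma Gvand_poly delta (alpha : F) (i : 'I_n) :
  Gvand n delta alpha ord0 i = \poly_(nu < delta.+1) alpha ^+ (i * nu).
Proof. by rewrite mxE poly_def. Qed.

Lemma pz_Gvand delta (alpha : F) : alpha ^+ n = 1 ->
  pz (Gvand n delta alpha) = \poly_(nu < delta.+1) iter nu (sigmaA n alpha) qones.
Proof.
move=> an; apply/polyP => k; rewrite coef_pz coef_poly.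
under eq_mx => ? i do rewrite Gvand_poly coef_poly.
case: ltnP => _; last first.
  by rewrite -(linear0 (@pvec F n)); congr pvec; apply/rowP => i; rewrite !mxE.
rewrite iter_sigmaA // -pvec_powers; last by rewrite exprAC an expr1n.
by congr pvec; apply/rowP => i; rewrite !mxE mulnC exprM.
Qed.

Lemma pimage_im_Gvand delta (alpha : F) P : alpha ^+ n = 1 ->
  pimage (im_mx (Gvand n delta alpha)) P <->
  Fz_multiples (\poly_(nu < delta.+1) iter nu (sigmaA n alpha) qones) P.
Proof.
move=> an; rewrite -pz_Gvand //; split.
  move=> [_ [u ->] ->]; exists (u ord0 ord0).
  by rewrite {1}(mx11_scalar u) mul_scalar_mx pz_scale.
move=> [U ->]; exists (U *: Gvand n delta alpha); last by rewrite pz_scale.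
by exists U%:M; rewrite mul_scalar_mx.
Qed.

Lemma sigma_cyclic_im_Gvand delta (alpha : F) : alpha ^+ n = 1 ->
  sigma_cyclic (sigmaA n alpha) (im_mx (Gvand n delta alpha)).
Proof.
move=> an; have sigmaM := (sigmaA_monoid_morphism n_gt0 an).2.
apply: left_ideal_ext (Fz_multiples_left_ideal sigmaM mul_qones delta.+1) => P.
by rewrite pimage_im_Gvand.
Qed.

End CyclicCode.

Lemma prim_root_sum_exprM (R : idomainType) n (z : R) nu :
  n.-primitive_root z -> ~~ (n %| nu)%N -> \sum_(i < n) z ^+ (i * nu) = 0.
Proof.
move=> prim_z n_nu; have z_nu1 : z ^+ nu != 1 by rewrite -(prim_order_dvd prim_z).
have : (z ^+ nu - 1) * \sum_(i < n) (z ^+ nu) ^+ i = 0.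
  by rewrite -subrX1 exprAC (prim_expr_order prim_z) expr1n subrr.
move/eqP; rewrite mulf_eq0 subr_eq0 (negbTE z_nu1) => /eqP sum0.
by rewrite -[RHS]sum0; apply: eq_bigr => i _; rewrite mulnC exprM.
Qed.

Lemma count_neq0_nth (R : nmodType) (s : seq R) N : (size s <= N)%N ->
  count (fun a => a != 0) s = (\sum_(k < N) (s`_k != 0)%R)%N.
Proof.
elim: s N => [|x s IHs] [|N] //= s_N; rewrite ?big_ord0 //.
  by rewrite big1 // => k _; rewrite nth_nil eqxx.
by rewrite big_ord_recl /= (IHs N).
Qed.

Section Weights.
Local Open Scope nat_scope.

Lemma sum_three_blocks m g (w : nat -> nat) :
  \sum_(j < m + g + m) w j =
    \sum_(i < m) (w i + w (m + g + i)) + \sum_(i < g) w (m + i).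
Proof. by rewrite !big_split_ord big_split /= addnAC. Qed.

Lemma leq_mul_sum m c (f : nat -> nat) :
  (forall i, i < m -> c <= f i) -> m * c <= \sum_(i < m) f i.
Proof.
move=> f_ge; rewrite -[m in m * _]card_ord -sum_nat_const.
by apply: leq_sum => i _; apply: f_ge.
Qed.

(* [w j] stands for the weight at time [a + j] of [U G], where [U] has support
   [a .. a + L]: the coefficients of [U] seen at that time sit in degrees
   [j - L .. minn j delta], and at least one of them is nonzero when
   [j <= delta] or [L <= j]. *)
Lemma sum_weights_ge n delta L (w : nat -> nat) : delta < n ->
  (forall j, j <= L + delta -> (j <= delta) || (L <= j) ->
     n + (j - L) <= w j + minn j delta) ->
  n * delta.+1 <= \sum_(j < L + delta.+1) w j.
Proof.
(* Times [j] and [L' + j] are paired, with [L' = max L delta.+1]; if [L <= delta]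
   the unpaired middle times still have weight at least [n - L]. *)
move=> delta_n w_ge; have [delta_L | L_delta] := ltnP delta L.
  rewrite (_ : L + delta.+1 = delta.+1 + (L - delta.+1) + delta.+1); last by lia.
  rewrite sum_three_blocks mulnC; apply: leq_trans (leq_addr _ _).
  set L' := delta.+1 + (L - delta.+1).
  apply: (leq_mul_sum (f := fun i => w i + w (L' + i))) => i i_delta.
  by have := w_ge i; have := w_ge (L' + i); lia.
have [M def_delta] : exists M, delta.+1 = L + M by exists (delta.+1 - L); lia.
rewrite (_ : L + delta.+1 = L + M + L); last by lia.
rewrite sum_three_blocks.
have pairs : L * (2 * n + 1) <= \sum_(i < L) (w i + w (L + M + i) + L).
  apply: (leq_mul_sum (f := fun i => w i + w (L + M + i) + L)) => i i_L.
  by have := w_ge i; have := w_ge (L + M + i); lia.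
have middle : M * n <= \sum_(i < M) (w (L + i) + L).
  apply: (leq_mul_sum (f := fun i => w (L + i) + L)) => i i_M.
  by have := w_ge (L + i); lia.
rewrite !big_split !sum_nat_const !card_ord /= in pairs middle *.
have LM_n : L + M <= n.+1 by lia.
rewrite def_delta; nia.
Qed.

End Weights.

Lemma card_prim_nonroots (R : idomainType) n (z : R) (P : {poly R}) s t :
  n.-primitive_root z -> P != 0 -> (forall nu, (nu < s)%N -> P`_nu = 0) ->
  (size P <= t.+1)%N -> (n + s <= #|[set i : 'I_n | P.[z ^+ i] != 0%R]| + t)%N.
Proof.
move=> prim_z P0 P_low P_size; set Q := drop_poly s P.
have def_P : P = Q * 'X^s.
  rewrite -{1}(poly_take_drop s P) (_ : take_poly s P = 0) ?add0r //.
  by apply/polyP => nu; rewrite coef_take_poly coef0; case: ifP => // /P_low.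
have Q0 : Q != 0 by apply: contraNneq P0 => Q0; rewrite def_P Q0 mul0r.
have z0 : z != 0 by rewrite (prim_root_eq0 prim_z) -lt0n (prim_order_gt0 prim_z).
set S := [set i : 'I_n | root Q (z ^+ i)].
have nonroots : [set i : 'I_n | P.[z ^+ i] != 0] = ~: S.
  apply/setP => i; rewrite !inE def_P hornerM hornerXn.
  by rewrite mulf_eq0 !expf_eq0 (negbTE z0) !andbF orbF rootE.
have card_S : (#|S| < size Q)%N.
  rewrite cardE -(size_map (fun i : 'I_n => z ^+ i)); apply: max_poly_roots Q0 _ _.
    by apply/allP => _ /mapP [i iS ->]; rewrite mem_enum inE in iS.
  rewrite map_inj_in_uniq ?enum_uniq // => i j _ _ /eqP.
  by rewrite (eq_prim_root_expr prim_z) !modn_small // => /eqP /val_inj.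
have := cardsC S; rewrite nonroots card_ord size_drop_poly in card_S *; lia.
Qed.

Lemma wt_timewise (F : fieldType) n (c : 'rV[{poly F}]_n) N :
  (forall i, size (c ord0 i) <= N)%N ->
  wt c = (\sum_(k < N) #|[set i : 'I_n | ((c ord0 i)`_k != 0)%R]|)%N.
Proof.
move=> c_N; rewrite /wt; under eq_bigr => i _ do rewrite (count_neq0_nth (c_N i)).
rewrite exchange_big; apply: eq_bigr => k _ /=.
by rewrite -sum1dep_card [RHS]big_mkcond; apply: eq_bigr => i _; case: eqP.
Qed.

Section VandermondeCode.
Variables (F : fieldType) (n delta : nat) (alpha : F).
Hypotheses (prim_alpha : n.-primitive_root alpha) (delta_n : (delta < n)%N).
Local Notation G := (Gvand n delta alpha).

Let n_gt0 : (0 < n)%N := prim_order_gt0 prim_alpha.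

Let alpha_neq0 : alpha != 0.
Proof. by rewrite (prim_root_eq0 prim_alpha) -lt0n. Qed.

Lemma size_Gvand i : size (G ord0 i) = delta.+1.
Proof. by rewrite Gvand_poly size_poly_eq // expf_neq0. Qed.

Lemma sum_Gvand : \sum_(i < n) G ord0 i = (n%:R : F)%:P.
Proof.
under eq_bigr => i _ do rewrite mxE.
rewrite exchange_big big_ord_recl /= [X in _ + X]big1 => [|nu _]; last first.
  rewrite -scaler_suml prim_root_sum_exprM ?scale0r // gtnNdvd //.
  by rewrite (leq_ltn_trans (ltn_ord nu)).
under eq_bigr => i _ do rewrite muln0 expr0.
by rewrite addr0 -scaler_suml sumr_const card_ord expr0 alg_polyC.
Qed.

Lemma right_invertible_Gvand : right_invertible G.
Proof.
exists (const_mx (n%:R^-1)%:P); apply/matrixP => i j.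
rewrite !ord1 [LHS]mxE [RHS]mxE.
under eq_bigr => k _ do rewrite [const_mx _ _ _]mxE.
by rewrite -mulr_suml sum_Gvand -polyCM mulfV ?(prim_root_natf_neq0 prim_alpha).
Qed.

Lemma max_entry_deg_Gvand : max_entry_deg G = delta.
Proof.
rewrite /max_entry_deg big_ord1.
under eq_bigr => j _ do rewrite size_Gvand.
by apply/eqP; rewrite eqn_leq (leq_bigmax (Ordinal n_gt0)) andbT; apply/bigmax_leqP.
Qed.

Lemma conv_code_im_Gvand : conv_code n 1 delta (im_mx G).
Proof.
by exists G; split; [exact: right_invertible_Gvand | exact: max_entry_deg_Gvand |].
Qed.

Lemma wt_Gvand : wt G = (n * delta.+1)%N.
Proof.
rewrite /wt -[n in (n * _)%N]card_ord -sum_nat_const; apply: eq_bigr => i _.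
rewrite (count_neq0_nth (eq_leq (size_Gvand i))) -[X in _ = X]card_ord -sum1_card.
by apply: eq_bigr => k _; rewrite Gvand_poly coef_poly ltn_ord expf_neq0.
Qed.

Lemma coef_mul_Gvand (U : {poly F}) i k :
  (U * G ord0 i)`_k = (\poly_(nu < delta.+1) (U * 'X^nu)`_k).[alpha ^+ i].
Proof.
rewrite mxE mulr_sumr coef_sum horner_poly; apply: eq_bigr => nu _.
by rewrite -scalerAr coefZ mulrC -exprM.
Qed.

Lemma weight_mul_Gvand_ge (U : {poly F}) a L j :
  (forall t, (t < a)%N -> U`_t = 0) -> U`_a != 0 -> size U = (a + L).+1 ->
  (j <= L + delta)%N -> (j <= delta)%N || (L <= j)%N ->
  (n + (j - L) <= #|[set i : 'I_n | ((U * G ord0 i)`_(a + j) != 0)%R]| + minn j delta)%N.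
Proof.
move=> U_low U_a size_U j_le j_cases.
have U_top : U`_(a + L) != 0.
  have U0 : U != 0 by apply: contraNneq U_a => ->; rewrite coef0.
  by rewrite -lead_coef_eq0 lead_coefE size_U in U0.
set P := \poly_(nu < delta.+1) (U * 'X^nu)`_(a + j).
have -> : [set i : 'I_n | (U * G ord0 i)`_(a + j) != 0] =
          [set i : 'I_n | P.[alpha ^+ i] != 0].
  by apply/setP => i; rewrite !inE coef_mul_Gvand.
have coefP nu :
    P`_nu = if ((nu <= delta) && (nu <= a + j))%N then U`_(a + j - nu) else 0.
  rewrite coef_poly coefMXn ltnS ltnNge.
  by case: (nu <= delta)%N; case: (nu <= a + j)%N.
apply: card_prim_nonroots prim_alpha _ _ _.
- have [nu [nu_delta nu_aj U_nu]] :
      exists nu, [/\ (nu <= delta)%N, (nu <= a + j)%N & U`_(a + j - nu) != 0].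
    case/orP: j_cases => j_cases.
      by exists j; rewrite addnK leq_addl.
    exists (j - L)%N; rewrite (_ : a + j - (j - L) = a + L)%N; last by lia.
    by split=> //; lia.
  by apply/eqP => /polyP /(_ nu); rewrite coefP nu_delta nu_aj coef0; apply/eqP.
- move=> nu nu_lt; rewrite coefP; case: ifP => // _.
  by rewrite nth_default // size_U; lia.
- apply/leq_sizeP => nu nu_gt; rewrite coefP.
  by case: ifP => // /andP [nu_delta nu_aj]; apply: U_low; lia.
Qed.

Lemma wt_scale_Gvand_ge (U : {poly F}) :
  U != 0 -> (n * delta.+1 <= wt (U *: G))%N.
Proof.
move=> U0; have exU : exists t, U`_t != 0.
  by exists (size U).-1; rewrite -lead_coefE lead_coef_eq0.
have [a U_a a_min] := ex_minnP exU.
have U_low t : (t < a)%N -> U`_t = 0.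
  by apply: contraTeq => /a_min; rewrite -leqNgt.
have [L size_U] : exists L, size U = (a + L).+1%N.
  have : (a < size U)%N by rewrite ltnNge; apply: contraNN U_a => /leq_sizeP ->.
  by exists ((size U).-1 - a)%N; lia.
rewrite (@wt_timewise _ _ _ (a + (L + delta.+1))%N) => [|i]; last first.
  by rewrite mxE (leq_trans (size_mul_leq _ _)) // size_Gvand size_U; lia.
rewrite big_split_ord /=; apply: leq_trans (leq_addl _ _).
set w := fun j => #|[set i : 'I_n | ((U *: G) ord0 i)`_(a + j) != 0]|.
apply: (sum_weights_ge (w := w)) => // j j_le j_cases.
rewrite /w; under eq_finset => i do rewrite mxE.
exact: weight_mul_Gvand_ge.
Qed.

Lemma MDS_im_Gvand : MDS n delta (im_mx G).
Proof.
split.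
  exists G; split; [by exists 1%:M; rewrite mul1mx | | exact: wt_Gvand].
  apply/eqP => /matrixP /(_ ord0 (Ordinal n_gt0)) G0.
  by have := size_Gvand (Ordinal n_gt0); rewrite G0 mxE size_poly0.
move=> _ [u ->]; rewrite (mx11_scalar u) mul_scalar_mx => uG0.
by apply: wt_scale_Gvand_ge; apply: contraNneq uG0 => ->; rewrite scale0r.
Qed.

End VandermondeCode.

Theorem proposition4p2 (F : finFieldType) (n : nat) (alpha : F) (delta : nat) :
  (0 < n)%N -> coprime n #|F| -> n.-primitive_root alpha ->
  [/\ (* sigma is an F-algebra automorphism of A with sigma(x) = alpha x *)
      linear (sigmaA n alpha) /\
      monoid_morphism (sigmaA n alpha),
      bijective (sigmaA n alpha),
      sigmaA n alpha 'qX = alpha *: 'qX,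
      (* im G is sigma-cyclic *)
      sigma_cyclic (sigmaA n alpha) (im_mx (Gvand n delta alpha)) &
      (* if delta < n: sigma-cyclic MDS convolutional code with params (n,1,delta) *)
      (delta < n)%N ->
        conv_code n 1 delta (im_mx (Gvand n delta alpha)) /\
        MDS n delta (im_mx (Gvand n delta alpha))].
Proof.
(* Coprimality is implied: a primitive [n]-th root forces [n%:R != 0]. *)
move=> n_gt0 _ prim_alpha; have alpha_n := prim_expr_order prim_alpha.
split.
- by split; [exact: sigmaA_is_linear | exact: sigmaA_monoid_morphism].
- exact: sigmaA_bij.
- exact: sigmaA_qX.
- exact: sigma_cyclic_im_Gvand.
- by move=> delta_n; split; [exact: conv_code_im_Gvand | exact: MDS_im_Gvand].
Qed.
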